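(* (1) If $R$ is a Bézout ring (every finitely generated ideal is principal), then every $R$-module satisfies the dual of Property $\mathcal{A}$. (2) If $R$ has Krull dimension zero, then every $R$-module satisfies the dual of Property $\mathcal{A}$. (3) Every finitely generated $R$-module satisfies the dual of Property $\mathcal{A}$. (4) If $M$ is an Artinian $R$-module, then for every ideal $I$ of $R$ (not necessarily finitely generated) with $I\subseteq W_R(M)$ we have $IM\neq M$; in particular $M$ satisfies the dual of Property $\mathcal{A}$.
   Context: All rings are commutative with identity. For an $R$-module $M$, $W_R(M)=\{r\in R : rM\neq M\}$. An $R$-module $M$ satisfies the dual of Property $\mathcal{A}$ if for every finitely generated ideal $I$ of $R$ with $I\subseteq W_R(M)$ we have $IM\neq M$. *)

From mathcomp Require Import all_boot all_algebra.
Set Implicit Arguments. Unset Strict Implicit. Unset Printing Implicit Defensive.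
Import GRing.Theory.
Local Open Scope ring_scope.

Definition is_ideal (R : comPzRingType) (I : R -> Prop) : Prop :=
  [/\ I 0, (forall x y, I x -> I y -> I (x + y)) & (forall r x, I x -> I (r * x))].

Definition fg_ideal (R : comPzRingType) (I : R -> Prop) : Prop :=
  exists s : seq R, forall x,
    I x <-> exists c : 'I_(size s) -> R, x = \sum_(i < size s) c i * s`_i.

Definition principal_ideal (R : comPzRingType) (I : R -> Prop) : Prop :=
  exists a : R, forall x, I x <-> exists c : R, x = c * a.

Definition bezout_ring (R : comPzRingType) : Prop :=
  forall I : R -> Prop, fg_ideal I -> principal_ideal I.

Definition prime_ideal (R : comPzRingType) (P : R -> Prop) : Prop :=
  [/\ is_ideal P, ~ P 1 & forall a b, P (a * b) -> P a \/ P b].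

Definition maximal_ideal (R : comPzRingType) (P : R -> Prop) : Prop :=
  [/\ is_ideal P, ~ P 1 &
     forall J : R -> Prop, is_ideal J -> (forall x, P x -> J x) ->
       (forall x, J x -> P x) \/ J 1].

Definition krull_dim_zero (R : comPzRingType) : Prop :=
  forall P : R -> Prop, prime_ideal P -> maximal_ideal P.

Definition rM_ne_M (R : comPzRingType) (M : lmodType R) (r : R) : Prop :=
  exists m : M, forall m' : M, m <> r *: m'.

Definition W (R : comPzRingType) (M : lmodType R) : R -> Prop :=
  fun r => @rM_ne_M R M r.

Definition IM (R : comPzRingType) (M : lmodType R) (I : R -> Prop) : M -> Prop :=
  fun m => exists (n : nat) (a : 'I_n -> R) (x : 'I_n -> M),
    (forall k, I (a k)) /\ m = \sum_(k < n) a k *: x k.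

Definition IM_ne_M (R : comPzRingType) (M : lmodType R) (I : R -> Prop) : Prop :=
  exists m : M, ~ @IM R M I m.

Definition dual_property_A (R : comPzRingType) (M : lmodType R) : Prop :=
  forall I : R -> Prop, fg_ideal I ->
    (forall r, I r -> @W R M r) -> @IM_ne_M R M I.

Definition fg_module (R : comPzRingType) (M : lmodType R) : Prop :=
  exists s : seq M, forall m : M,
    exists c : 'I_(size s) -> R, m = \sum_(i < size s) c i *: s`_i.

Definition is_submodule (R : comPzRingType) (M : lmodType R) (N : M -> Prop) : Prop :=
  [/\ N 0, (forall x y, N x -> N y -> N (x + y)) & (forall r x, N x -> N (r *: x))].

Definition artinian_module (R : comPzRingType) (M : lmodType R) : Prop :=
  forall N : nat -> M -> Prop,
    (forall n, is_submodule (N n)) ->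
    (forall n x, N n.+1 x -> N n x) ->
    exists k, forall n, (k <= n)%N -> forall x, N n x <-> N k x.

From mathcomp Require Import all_boot all_algebra ring.
From mathcomp Require classical_sets.
From Stdlib Require Import Classical ClassicalEpsilon.
Set Implicit Arguments. Unset Strict Implicit. Unset Printing Implicit Defensive.
Import GRing.Theory.
Local Open Scope ring_scope.

(* (1) If I = (a), then IM is contained in aM, which differs from M.
   (3) If IM = M with M finitely generated, the determinant trick yields a in I acting as the
   identity on M.
   (2) A zero-dimensional ring is pi-regular, x^n (1 - x b) = 0 for some n and b: an ideal
   maximal among those avoiding the multiplicative set of such products is prime, hence
   maximal, and cannot contain x.  For I = (s_1, ..., s_n) this gives h with 1 - h in I and
   h s_i^k = 0 for all i; if IM = M then h kills M = I^N M, so (1 - h) M = M.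
   (4) Take a minimal submodule L with IL = L on which no element of I acts surjectively,
   and a in I whose stable image aL = a^2 L is nonzero and minimal.  By Fitting's lemma
   L = aL + X with X an I-stable part of ker a, and X is proper, so cX = X for some c in I.
   Minimality of aL makes every d in I that agrees with c on X nilpotent on aL (else d would
   act surjectively on L); taking d = c and d = a + c shows that a is nilpotent on aL,
   which contradicts aL = a^k (aL) != 0. *)

Local Notation "A `<=` B" := (forall x, A x -> B x) (at level 70, no associativity).

Section Ideals.
Variable R : comPzRingType.
Implicit Types (I : R -> Prop) (x y r : R).

Lemma is_ideal0 I : is_ideal I -> I 0.
Proof. by case. Qed.

Lemma is_idealD I x y : is_ideal I -> I x -> I y -> I (x + y).
Proof. by case=> _ + _; apply. Qed.

Lemma is_idealMl I r x : is_ideal I -> I x -> I (r * x).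
Proof. by case=> _ _; apply. Qed.

Lemma is_idealMr I r x : is_ideal I -> I x -> I (x * r).
Proof. by rewrite mulrC; apply: is_idealMl. Qed.

Lemma fg_ideal_is_ideal I : fg_ideal I -> is_ideal I.
Proof.
case=> s Hs; split.
- by apply/Hs; exists (fun=> 0); rewrite big1 // => i _; rewrite mul0r.
- move=> _ _ /Hs[c1 ->] /Hs[c2 ->]; apply/Hs; exists (fun i => c1 i + c2 i).
  by rewrite -big_split; apply: eq_bigr => i _; rewrite mulrDl.
- move=> r _ /Hs[c ->]; apply/Hs; exists (fun i => r * c i).
  by rewrite mulr_sumr; apply: eq_bigr => i _; rewrite mulrA.
Qed.

Lemma fg_ideal_generator I (s : seq R) :
  (forall x, I x <-> exists c : 'I_(size s) -> R, x = \sum_(i < size s) c i * s`_i) ->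
  forall i, (i < size s)%N -> I s`_i.
Proof.
move=> Hs i lt_i; apply/Hs; exists (fun j => (val j == i)%:R).
rewrite (bigD1 (Ordinal lt_i)) //= eqxx mul1r big1 ?addr0 // => j.
by rewrite -val_eqE /= => /negPf ->; rewrite mul0r.
Qed.

End Ideals.

Section IdealSpan.
Variables (R : comPzRingType) (M : lmodType R).
Implicit Types (I : R -> Prop) (L : M -> Prop).

Inductive ideal_span I L : M -> Prop :=
| ideal_span0 : ideal_span I L 0
| ideal_spanZ a y : I a -> L y -> ideal_span I L (a *: y)
| ideal_spanD x y : ideal_span I L x -> ideal_span I L y -> ideal_span I L (x + y).

Lemma IM_ideal_span I m : IM I m -> ideal_span I (fun=> True) m.
Proof.
case=> n [a [x [Ia ->]]]; elim: n a x Ia => [|n IHn] a x Ia.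
  by rewrite big_ord0; apply: ideal_span0.
rewrite big_ord_recr /=; apply: ideal_spanD; last exact: ideal_spanZ.
exact: (IHn (fun i => a (widen_ord (leqnSn n) i))).
Qed.

Lemma ideal_span_of_not_IM_ne_M I :
  ~ IM_ne_M M I -> forall m, ideal_span I (fun=> True) m.
Proof.
move=> IM_full m; apply: IM_ideal_span; apply: NNPP => IMm.
by apply: IM_full; exists m.
Qed.

Lemma ideal_span_principal I a m :
  (forall x, I x -> exists c, x = c * a) ->
  ideal_span I (fun=> True) m -> exists y, m = a *: y.
Proof.
move=> Ha; elim=> [|b y /Ha[c ->] _|x y _ [x' ->] _ [y' ->]].
- by exists 0; rewrite scaler0.
- by exists (c *: y); rewrite scalerA mulrC.
- by exists (x' + y'); rewrite scalerDr.
Qed.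

Lemma ideal_span_fg I (s : seq R) m :
  (forall x, I x <-> exists c : 'I_(size s) -> R, x = \sum_(i < size s) c i * s`_i) ->
  ideal_span I (fun=> True) m ->
  exists y : 'I_(size s) -> M, m = \sum_(i < size s) s`_i *: y i.
Proof.
move=> Hs; elim=> [|a y /Hs[c ->] _|x y _ [yx ->] _ [yy ->]].
- by exists (fun=> 0); rewrite big1 // => i _; rewrite scaler0.
- exists (fun i => c i *: y).
  by rewrite scaler_suml; apply: eq_bigr => i _; rewrite scalerA mulrC.
- exists (fun i => yx i + yy i).
  by rewrite -big_split; apply: eq_bigr => i _; rewrite scalerDr.
Qed.

End IdealSpan.

Lemma bezout_dual_property_A (R : comPzRingType) (M : lmodType R) :
  bezout_ring R -> dual_property_A M.
Proof.
move=> bezoutR I fgI IW; have [a Ha] := bezoutR I fgI.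
have Ia : I a by apply/Ha; exists 1; rewrite mul1r.
have [m0 Hm0] := IW a Ia.
have aI x : I x -> exists c, x = c * a by move/Ha.
by exists m0 => /IM_ideal_span /(ideal_span_principal aI) [y]; apply: Hm0.
Qed.

Section DeterminantTrick.
Variables (R : comPzRingType) (M : lmodType R) (I : R -> Prop).
Hypothesis idealI : is_ideal I.

(* Gaussian elimination of t_k: after scaling by u = 1 - A k k, the vectors u t_i (i < k)
   satisfy a system of the same shape, and [1 - (1 - b) u^2] lies in I. *)
Lemma determinant_trick k (t : nat -> M) (A : nat -> nat -> R) :
  (forall i j, I (A i j)) ->
  (forall i, (i < k)%N -> t i = \sum_(j < k) A i j *: t j) ->
  exists2 a, I a & forall i, (i < k)%N -> a *: t i = t i.
Proof.
elim: k t A => [|k IHk] t A IA Ht; first by exists 0 => //; apply: is_ideal0.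
have [u uE] : {u | u = 1 - A k k} by exists (1 - A k k).
have ut_k : u *: t k = \sum_(j < k) A k j *: t j.
  by rewrite uE scalerBl scale1r {1}(Ht k (ltnSn k)) big_ord_recr addrK.
have ut_i i : (i < k)%N -> u *: t i = \sum_(j < k) (u * A i j + A i k * A k j) *: t j.
  move=> lt_ik; rewrite {1}(Ht i (ltnW lt_ik)) big_ord_recr /= scalerDr.
  rewrite scalerA mulrC -scalerA ut_k !scaler_sumr -big_split /=.
  by apply: eq_bigr => j _; rewrite !scalerA scalerDl.
pose A' i j := u * A i j + A i k * A k j + (i == j)%:R * A k k.
have IA' i j : I (A' i j).
  by rewrite /A'; do !apply: is_idealD => //; apply: is_idealMl.
have Ht' i : (i < k)%N -> u *: t i = \sum_(j < k) A' i j *: (u *: t j).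
  move=> lt_ik; under eq_bigr do rewrite scalerDl (scalerA _ u) [_ * u]mulrC -scalerA.
  rewrite big_split /= -scaler_sumr -ut_i // (bigD1 (Ordinal lt_ik)) //= eqxx mul1r.
  rewrite big1 => [|j]; last by rewrite -val_eqE /= eq_sym => /negPf ->; rewrite mul0r scale0r.
  by rewrite addr0 -scalerDl uE subrK scale1r.
have [b Ib Hb] := IHk _ _ IA' Ht'.
exists (1 - (1 - b) * (u * u)).
  have -> : 1 - (1 - b) * (u * u) = b + (1 - b) * (2%:R - A k k) * A k k.
    by rewrite uE; ring.
  by apply: is_idealD => //; apply: is_idealMl.
have fixed i : (i < k)%N -> (1 - b) *: (u *: t i) = 0.
  by move=> lt_ik; rewrite scalerBl scale1r Hb // subrr.
move=> i; rewrite ltnS leq_eqVlt => /orP[/eqP->|lt_ik].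
  rewrite scalerBl scale1r -!scalerA ut_k !scaler_sumr big1 ?subr0 // => j _.
  rewrite [u *: _]scalerA mulrC -scalerA [(1 - b) *: _]scalerA mulrC -scalerA.
  by rewrite fixed // scaler0.
by rewrite scalerBl scale1r -scalerA -scalerA [(1 - b) *: _]scalerA mulrC -scalerA
  fixed // scaler0 subr0.
Qed.

End DeterminantTrick.

Lemma fg_module_dual_property_A (R : comPzRingType) (M : lmodType R) :
  fg_module M -> dual_property_A M.
Proof.
case=> s Hs I /fg_ideal_is_ideal idealI IW; apply: NNPP => IM_full.
have coef i : exists c : nat -> R,
    (forall j, I (c j)) /\ s`_i = \sum_(j < size s) c j *: s`_j.
  elim: (ideal_span_of_not_IM_ne_M IM_full s`_i)
    => [|a y Ia _|x y _ [cx [Icx ->]] _ [cy [Icy ->]]].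
  - exists (fun=> 0); split=> [_|]; first exact: is_ideal0.
    by rewrite big1 // => j _; rewrite scale0r.
  - have [c ->] := Hs y.
    exists (fun j => if insub j is Some o then a * c o else 0); split.
      by move=> j; case: insub => [o|]; [apply: is_idealMr | apply: is_ideal0].
    by rewrite scaler_sumr; apply: eq_bigr => j _; rewrite valK scalerA.
  - exists (fun j => cx j + cy j); split=> [j|]; first exact: is_idealD.
    by rewrite -big_split; apply: eq_bigr => j _; rewrite scalerDl.
have [A HA] := choice _ coef.
have [a Ia Ha] := determinant_trick idealI (fun i => (HA i).1) (fun i _ => (HA i).2).
have [m0 Hm0] := IW a Ia; apply: (Hm0 m0); have [c ->] := Hs m0.
by rewrite scaler_sumr; apply: eq_bigr => i _; rewrite scalerA mulrC -scalerA Ha.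
Qed.

Section MaximalAvoiding.
Variables (R : comPzRingType) (S : R -> Prop).
Implicit Types (A B : R -> Prop).

Lemma exists_ideal_maximal_avoiding : ~ S 0 ->
  exists A, [/\ is_ideal A, (forall r, A r -> ~ S r) &
    forall B, is_ideal B -> (forall r, B r -> ~ S r) -> A `<=` B -> B `<=` A].
Proof.
move=> nS0.
(* Zorn's lemma also bounds the empty chain, so P does not ask for 0 in A;
   maximality puts it back. *)
pose P A := [/\ forall r, A r -> ~ S r, forall x y, A x -> A y -> A (x + y)
  & forall r x, A x -> A (r * x)].
have [A [[AS AD AM] maxA]] : exists A, P A /\ forall B, classical_sets.proper A B -> ~ P B.
  apply: classical_sets.Zorn_bigcup => F FP Ftot; split.
  - by move=> r [X /FP[XS _ _]]; apply: XS.
  - move=> x y [X FX Xx] [Y FY Yy].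
    have [XY|YX] := Ftot X Y FX FY.
      by exists Y => //; have [_ YD _] := FP Y FY; apply: YD => //; apply: XY.
    by exists X => //; have [_ XD _] := FP X FX; apply: XD => //; apply: YX.
  - move=> r x [X FX Xx]; exists X => //.
    by have [_ _ XM] := FP X FX; apply: XM.
have A0 : A 0.
  apply: NNPP => nA0; apply: (maxA (fun r => A r \/ r = 0)).
    by split=> [r Ar|/(_ 0 (or_intror erefl))]; [left|].
  split=> [r [/AS //|->] //|x y [Ax|->] [Ay|->]|r x [Ax|->]].
  - by left; apply: AD.
  - by rewrite addr0; left.
  - by rewrite add0r; left.
  - by rewrite addr0; right.
  - by left; apply: AM.
  - by rewrite mulr0; right.
exists A; split=> // B [_ BD BM] BS AB; apply: NNPP => BA.
by apply: (maxA B); split.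
Qed.

End MaximalAvoiding.

Section PiRegular.
Variable R : comPzRingType.
Implicit Types (A : R -> Prop) (a x : R).

Definition ideal_adjoin A a : R -> Prop := fun r => exists p t, A p /\ r = p + a * t.

Lemma is_ideal_adjoin A a : is_ideal A -> is_ideal (ideal_adjoin A a).
Proof.
move=> idealA; split.
- by exists 0, 0; rewrite mulr0 addr0; split=> //; apply: is_ideal0.
- move=> _ _ [p [t [Ap ->]]] [q [u [Aq ->]]].
  by exists (p + q), (t + u); split; [apply: is_idealD | ring].
- move=> r _ [p [t [Ap ->]]].
  by exists (r * p), (r * t); split; [apply: is_idealMl | ring].
Qed.

Lemma ideal_adjoin_sub A a : A `<=` ideal_adjoin A a.
Proof. by move=> r Ar; exists r, 0; rewrite mulr0 addr0. Qed.

Lemma ideal_adjoin_mem A a : is_ideal A -> ideal_adjoin A a a.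
Proof. by move=> idealA; exists 0, 1; rewrite add0r mulr1; split=> //; apply: is_ideal0. Qed.

Lemma maximal_avoiding_prime (S A : R -> Prop) :
  S 1 -> (forall x y, S x -> S y -> S (x * y)) ->
  is_ideal A -> (forall r, A r -> ~ S r) ->
  (forall B, is_ideal B -> (forall r, B r -> ~ S r) -> A `<=` B -> B `<=` A) ->
  prime_ideal A.
Proof.
move=> S1 SM idealA AS maxA; split=> // [/AS//|a b Aab].
have meets c : ~ A c -> exists r, ideal_adjoin A c r /\ S r.
  move=> nAc; apply: NNPP => avoid; apply/nAc/(maxA _ (is_ideal_adjoin c idealA)).
  - by move=> r Ar Sr; apply: avoid; exists r.
  - exact: ideal_adjoin_sub.
  - exact: ideal_adjoin_mem.
apply: NNPP => /not_or_and[/meets[_ [[p [t [Ap ->]]] S1']] /meets[_ [[q [u [Aq ->]]] S2']]].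
apply: (AS _ _ (SM _ _ S1' S2')).
have -> : (p + a * t) * (q + b * u) = (q + b * u) * p + (a * t) * q + (t * u) * (a * b).
  by ring.
by do !apply: is_idealD => //; apply: is_idealMl.
Qed.

Lemma pi_regular_of_krull_dim_zero :
  krull_dim_zero R -> forall x, exists n b, x ^+ n * (1 - x * b) = 0.
Proof.
move=> dim0 x; apply: NNPP => npi.
pose S r := exists n b, r = x ^+ n * (1 - x * b).
have [|A [idealA AS maxA]] := @exists_ideal_maximal_avoiding R S.
  by move=> [n [b E]]; apply: npi; exists n, b.
have SM r r' : S r -> S r' -> S (r * r').
  move=> [n [b ->]] [m [c ->]]; exists (n + m)%N, (b + c - x * b * c).
  by rewrite exprD; ring.
have S1 : S 1 by exists 0%N, 0; rewrite expr0 mulr0 subr0 mulr1.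
have [_ _ maxA'] := dim0 A (maximal_avoiding_prime S1 SM idealA AS maxA).
case: (maxA' _ (is_ideal_adjoin x idealA) (@ideal_adjoin_sub A x)).
- move=> /(_ x (ideal_adjoin_mem x idealA)) /AS; apply.
  by exists 1%N, 0; rewrite mulr0 subr0 mulr1 expr1.
- move=> [p [t [Ap E]]]; apply: (AS p Ap); exists 0%N, t.
  by rewrite expr0 mul1r E addrK.
Qed.

Lemma exists_cofactor_annihilating_powers (I : R -> Prop) (s : seq R) :
  (forall x, exists n b, x ^+ n * (1 - x * b) = 0) -> is_ideal I ->
  (forall i, (i < size s)%N -> I s`_i) ->
  exists h k, I (1 - h) /\ forall i, (i < size s)%N -> h * s`_i ^+ k = 0.
Proof.
move=> piR idealI; elim: s => [|a s IHs] Is.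
  by exists 1, 0%N; rewrite subrr; split=> //; apply: is_ideal0.
have [h [k [Ih hs]]] := IHs (fun i => Is i.+1).
have [n [b ab]] := piR a.
exists ((1 - a * b) * h), (n + k)%N; split.
  have -> : 1 - (1 - a * b) * h = (1 - h) + b * h * a by ring.
  by apply: is_idealD => //; apply: is_idealMl => //; apply: (Is 0%N).
move=> [|i] /= lt_i; rewrite exprD.
  have -> : (1 - a * b) * h * (a ^+ n * a ^+ k) = a ^+ n * (1 - a * b) * (h * a ^+ k).
    by ring.
  by rewrite ab mul0r.
have -> : (1 - a * b) * h * (s`_i ^+ n * s`_i ^+ k) = (1 - a * b) * s`_i ^+ n * (h * s`_i ^+ k).
  by ring.
by rewrite hs // mulr0.
Qed.

End PiRegular.

(* Induction on the total degree sum_i p_i: with M = (s_1, ..., s_n) M, r kills M as soon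
   as every r s_j does, and r s_j satisfies the hypothesis with p_j lowered by one. *)
Lemma annihilator_of_powers (R : comPzRingType) (M : lmodType R) (s : seq R) :
  (forall m : M, exists y : 'I_(size s) -> M, m = \sum_(i < size s) s`_i *: y i) ->
  forall r (p : nat -> nat), (forall i, (i < size s)%N -> r * s`_i ^+ p i = 0) ->
  forall m : M, r *: m = 0.
Proof.
move=> Ms r p; move: {2}(\sum_(i < size s) p i)%N (leqnn (\sum_(i < size s) p i)) => N.
elim: N r p => [|N IHN] r p le_p rp m; have [y ->] := Ms m;
  rewrite scaler_sumr big1 // => j _; rewrite scalerA; case pjE: (p j) => [|q];
  do ?by move: (rp j (ltn_ord j)); rewrite pjE expr0 mulr1 => ->; rewrite mul0r scale0r.
  by move: le_p; rewrite (bigD1 j) //= pjE.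
apply: (IHN _ (fun i => if i == val j then q else p i)) => [|i lt_i].
  move: le_p; rewrite (bigD1 j) //= pjE addSn ltnS; apply: leq_trans.
  rewrite (bigD1 j) //= eqxx leq_add2l; apply/eq_leq/eq_bigr => i.
  by rewrite -val_eqE => /negPf ->.
case: eqP => [->|_]; first by rewrite -mulrA -exprS -pjE rp.
by rewrite mulrAC rp // mul0r.
Qed.

Lemma krull_dim_zero_dual_property_A (R : comPzRingType) (M : lmodType R) :
  krull_dim_zero R -> dual_property_A M.
Proof.
move=> /pi_regular_of_krull_dim_zero piR I fgI IW.
have idealI := fg_ideal_is_ideal fgI; have [s Hs] := fgI.
apply: NNPP => IM_full.
have [h [k [Ih hs]]] := exists_cofactor_annihilating_powers piR idealI (fg_ideal_generator Hs).
have Ms m := ideal_span_fg Hs (ideal_span_of_not_IM_ne_M IM_full m).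
have hM := annihilator_of_powers Ms (p := fun=> k) hs.
have [m0 Hm0] := IW (1 - h) Ih; apply: (Hm0 m0).
by rewrite scalerBl scale1r hM subr0.
Qed.

Lemma scale_expD_eq0 (R : comPzRingType) (M : lmodType R) (u v : R) p q (x : M) :
  u ^+ p *: x = 0 -> v ^+ q *: x = 0 -> (u + v) ^+ (p + q) *: x = 0.
Proof.
move=> ux vx; rewrite exprDn scaler_suml big1 // => i _; rewrite -scalerMnl.
case: (leqP q i) => [le_qi|lt_iq].
  by rewrite -(subnK le_qi) exprD mulrA -scalerA vx scaler0 mul0rn.
have -> : (p + q - i = (p + q - i - p) + p)%N by rewrite subnK // -addnBA ?leq_addr // ltnW.
by rewrite exprD mulrAC -scalerA ux scaler0 mul0rn.
Qed.

Section Submodules.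
Variables (R : comPzRingType) (M : lmodType R).
Implicit Types (L X : M -> Prop) (I : R -> Prop) (a b : R).

Definition scale_set a L : M -> Prop := fun x => exists2 y, L y & x = a *: y.

Definition nilpotent_on a L := exists p, forall x, L x -> a ^+ p *: x = 0.

Lemma is_submodule_scale_set a L : is_submodule L -> is_submodule (scale_set a L).
Proof.
case=> L0 LD LZ; split.
- by exists 0; rewrite ?scaler0.
- by move=> _ _ [x Lx ->] [y Ly ->]; exists (x + y); rewrite ?scalerDr //; apply: LD.
- by move=> r _ [y Ly ->]; exists (r *: y); [apply: LZ | rewrite !scalerA mulrC].
Qed.

Lemma is_submoduleB L x y : is_submodule L -> L x -> L y -> L (x - y).
Proof. by case=> _ LD LZ Lx Ly; apply: LD; rewrite // -scaleN1r; apply: LZ. Qed.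

Lemma scale_set_sub a L : is_submodule L -> scale_set a L `<=` L.
Proof. by case=> _ _ LZ _ [y Ly ->]; apply: LZ. Qed.

Lemma scale_setM a b L : is_submodule L -> scale_set (a * b) L `<=` scale_set a L.
Proof. by case=> _ _ LZ _ [y Ly ->]; exists (b *: y); rewrite ?scalerA //; apply: LZ. Qed.

Lemma scale_set_exp b L : L `<=` scale_set b L ->
  forall p x, L x -> exists2 y, L y & x = b ^+ p *: y.
Proof.
move=> Lb; elim=> [|p IHp] x; first by exists x; rewrite ?expr0 ?scale1r.
move=> /IHp[y /Lb[z Lz ->] ->].
by exists z; rewrite // scalerA -exprSr.
Qed.

Lemma is_submodule_ideal_span I L : is_ideal I -> is_submodule (ideal_span I L).
Proof.
move=> idealI; split; [exact: ideal_span0 | exact: ideal_spanD |].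
move=> r x; elim=> [|a y Ia Ly|x1 x2 _ IH1 _ IH2].
- by rewrite scaler0; apply: ideal_span0.
- by rewrite scalerA; apply: ideal_spanZ => //; apply: is_idealMl.
- by rewrite scalerDr; apply: ideal_spanD.
Qed.

Lemma ideal_span_sub I L : is_submodule L -> ideal_span I L `<=` L.
Proof. by case=> L0 LD LZ x; elim=> // [a y _ /LZ|x1 x2 _ + _]; [|apply: LD]. Qed.

Lemma artinian_minimal (J : Type) (F : J -> M -> Prop) (P : J -> Prop) :
  artinian_module M -> (forall j, P j -> is_submodule (F j)) -> (exists j, P j) ->
  exists2 j, P j & forall j', P j' -> F j' `<=` F j -> F j `<=` F j'.
Proof.
move=> artM subF [j0 Pj0]; apply: NNPP => nomin.
have smaller (j : {j | P j}) : exists j' : {j | P j},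
    F (sval j') `<=` F (sval j) /\ ~ (F (sval j) `<=` F (sval j')).
  case: j => j Pj; apply: NNPP => nosmaller; apply: nomin; exists j => // j' Pj' sub.
  by apply: NNPP => nsub; apply: nosmaller; exists (exist _ j' Pj').
have [f Hf] := choice _ smaller.
pose N n := F (sval (iter n f (exist _ j0 Pj0))).
have [k Hk] := artM N (fun n => subF _ (svalP _)) (fun n => (Hf _).1).
apply: (Hf (iter k f (exist _ j0 Pj0))).2 => x Nkx.
exact: (Hk k.+1 (leqnSn k) x).2 Nkx.
Qed.

Lemma exists_stable_power b L : artinian_module M -> is_submodule L ->
  exists k, scale_set (b ^+ k.+1) L `<=` scale_set (b ^+ k.+1 * b ^+ k.+1) L.
Proof.
move=> artM subL.
have desc n : scale_set (b ^+ n.+1) L `<=` scale_set (b ^+ n) L.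
  by rewrite exprSr; apply: scale_setM.
have [k Hk] := artM _ (fun n => is_submodule_scale_set (b ^+ n) subL) desc.
have le_k : (k <= k.+1 + k.+1)%N by apply: leq_trans (leqnSn k) (leq_addr _ _).
exists k => x /(Hk k.+1 (leqnSn k) x).1 /(Hk _ le_k x).2.
by rewrite exprD.
Qed.

Section IdealStable.
Variable I : R -> Prop.
Hypothesis idealI : is_ideal I.

Definition ideal_stable L := L `<=` ideal_span I L.

Definition ideal_surjective L := exists2 a, I a & L `<=` scale_set a L.

Lemma ideal_stable_scale_set a L : ideal_stable L -> ideal_stable (scale_set a L).
Proof.
move=> stableL _ [y /stableL Ly ->]; elim: Ly => [|b z Ib Lz|x1 x2 _ IH1 _ IH2].
- by rewrite scaler0; apply: ideal_span0.
- by rewrite scalerA mulrC -scalerA; apply: ideal_spanZ => //; exists z.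
- by rewrite scalerDr; apply: ideal_spanD.
Qed.

Lemma ideal_stable_eq0 L : ideal_stable L ->
  (forall a y, I a -> L y -> a *: y = 0) -> L `<=` (fun x => x = 0).
Proof.
move=> stableL IL0 x /stableL; elim=> [//|a y Ia Ly|x1 x2 _ -> _ ->].
  exact: IL0.
by rewrite addr0.
Qed.

Section MinimalCounterexample.
Hypothesis artM : artinian_module M.
Variable L : M -> Prop.
Hypotheses (subL : is_submodule L) (stableL : ideal_stable L).
Hypothesis not_surjL : ~ ideal_surjective L.
Hypothesis minL : forall L', is_submodule L' -> ideal_stable L' -> L' `<=` L ->
  ideal_surjective L' \/ L `<=` L'.

Lemma exists_not_nilpotent_on : exists2 a, I a & ~ nilpotent_on a L.
Proof.
apply: NNPP => all_nil; apply: not_surjL; exists 0; first exact: is_ideal0.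
move=> x Lx; exists 0; first by case: subL.
rewrite scale0r; apply: (ideal_stable_eq0 stableL _ Lx) => a y Ia Ly.
have [[c Ic surjc]|La] := minL (is_submodule_scale_set a subL)
  (ideal_stable_scale_set (a:=a) stableL) (scale_set_sub (a:=a) subL).
  have [p cp] : nilpotent_on c L by apply: NNPP => nilc; apply: all_nil; exists c.
  have [z /(scale_set_sub subL) Lz ->] := scale_set_exp surjc p (ex_intro2 _ _ y Ly erefl).
  exact: cp.
by exfalso; apply: not_surjL; exists a.
Qed.

Definition power_stable_image b := [/\ I b, scale_set b L `<=` scale_set (b * b) L
  & exists2 x, scale_set b L x & x <> 0].

Lemma power_stable_image_exp a : I a -> ~ nilpotent_on a L ->
  exists k, power_stable_image (a ^+ k.+1).
Proof.
move=> Ia nila; have [k Hk] := exists_stable_power a artM subL.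
exists k; split=> //; first by rewrite exprSr; apply: is_idealMl.
apply: NNPP => img0; apply: nila; exists k.+1 => x Lx.
by apply: NNPP => nz; apply: img0; exists (a ^+ k.+1 *: x) => //; exists x.
Qed.

Lemma exists_minimal_power_stable_image : exists2 a, power_stable_image a &
  forall b, power_stable_image b -> scale_set b L `<=` scale_set a L ->
    scale_set a L `<=` scale_set b L.
Proof.
apply: artinian_minimal => // [b _|]; first exact: is_submodule_scale_set.
have [a Ia nila] := exists_not_nilpotent_on.
by have [k] := power_stable_image_exp Ia nila; exists (a ^+ k.+1).
Qed.

Section StableImage.
Variable a : R.
Hypothesis imga : power_stable_image a.
Hypothesis mina : forall b, power_stable_image b ->
  scale_set b L `<=` scale_set a L -> scale_set a L `<=` scale_set b L.

Definition covers X := forall x, L x -> exists2 y, L y & X (x - a *: y).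

Definition kernel_in : M -> Prop := fun x => L x /\ a *: x = 0.

Lemma is_submodule_kernel_in : is_submodule kernel_in.
Proof.
case: subL => L0 LD LZ; split=> [|x y [Lx ax] [Ly ay]|r x [Lx ax]].
- by split; rewrite ?scaler0.
- by split; [apply: LD | rewrite scalerDr ax ay addr0].
- by split; [apply: LZ | rewrite scalerA mulrC -scalerA ax scaler0].
Qed.

Lemma image_surjective : scale_set a L `<=` scale_set a (scale_set a L).
Proof.
have [_ a2 _] := imga; move=> x /a2[y Ly ->].
by exists (a *: y); rewrite ?scalerA //; exists y.
Qed.

(* Fitting's lemma: aL = a^2 L gives L = aL + ker a. *)
Lemma covers_kernel_in : covers kernel_in.
Proof.
have [_ a2 _] := imga; move=> x Lx.
have [y Ly axE] := a2 (a *: x) (ex_intro2 _ _ x Lx erefl).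
exists y => //; split; first by apply: is_submoduleB => //; case: subL => _ _; apply.
by rewrite scalerBr axE scalerA subrr.
Qed.

Lemma exists_stable_complement : exists2 X,
  [/\ is_submodule X, ideal_stable X & X `<=` kernel_in] & covers X.
Proof.
have [||X [subX kerX covX] minX] := @artinian_minimal _ id
  (fun X => [/\ is_submodule X, X `<=` kernel_in & covers X]) artM.
- by move=> X [].
- by exists kernel_in; split=> //; [exact: is_submodule_kernel_in | exact: covers_kernel_in].
have spanX : ideal_span I X `<=` X by apply: ideal_span_sub.
exists X => //; split=> //; apply: (minX _ _ spanX); split.
- exact: is_submodule_ideal_span.
- by move=> x /spanX /kerX.
- case: subL => L0 LD LZ x /stableL.
  elim=> [|b y Ib /covX[z Lz Xyz]|x1 x2 _ [z1 L1 X1] _ [z2 L2 X2]].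
  + by exists 0; rewrite // scaler0 subr0; apply: ideal_span0.
  + exists (b *: z); first exact: LZ.
    by rewrite scalerA mulrC -scalerA -scalerBr; apply: ideal_spanZ.
  + exists (z1 + z2); first exact: LD.
    by rewrite scalerDr opprD addrACA; apply: ideal_spanD.
Qed.

Section Complement.
Variables (X : M -> Prop) (c : R).
Hypotheses (kerX : X `<=` kernel_in) (covX : covers X).
Hypotheses (Ic : I c) (surjX : X `<=` scale_set c X).

(* An element of I agreeing with c on X is nilpotent on aL: otherwise a power of ad has a
   stable image inside aL, which by minimality is aL itself, and d would act surjectively
   on L = aL + X. *)
Lemma nilpotent_on_image d : I d -> (forall x, X x -> d *: x = c *: x) ->
  nilpotent_on d (scale_set a L).
Proof.
move=> Id dc.
have [p adp] : nilpotent_on (a * d) L.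
  apply: NNPP => nilad; have [k imgb] := power_stable_image_exp (is_idealMl a idealI Id) nilad.
  apply: not_surjL; exists d => // x /covX[y Ly /surjX[z Xz xE]].
  have sub_a : scale_set ((a * d) ^+ k.+1) L `<=` scale_set a L.
    by rewrite exprS -mulrA; apply: scale_setM.
  have [w Lw ayE] := mina imgb sub_a (ex_intro2 _ _ y Ly erefl).
  exists ((a * (a * d) ^+ k) *: w + z).
    by case: subL => _ LD LZ; apply: LD; [apply: LZ | case: (kerX Xz)].
  rewrite scalerDr (dc z Xz) -xE ayE scalerA mulrA [d * a]mulrC -exprS.
  by rewrite addrC subrK.
exists p => x ax; have [v av ->] := scale_set_exp image_surjective p ax.
by rewrite scalerA mulrC -exprMn adp //; apply: (scale_set_sub subL av).
Qed.

Lemma complement_contradiction : False.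
Proof.
have [Ia _ [x0 ax0 x0ne]] := imga.
have [p cp] := nilpotent_on_image Ic (fun _ _ => erefl).
have acX x : X x -> (a + c) *: x = c *: x.
  by move=> /kerX[_ ax]; rewrite scalerDl ax add0r.
have [q acq] := nilpotent_on_image (is_idealD idealI Ia Ic) acX.
apply: x0ne; have [y ay ->] := scale_set_exp image_surjective (q + p) ax0.
have -> : a = (a + c) + - c by rewrite addrK.
apply: scale_expD_eq0; first exact: acq.
by rewrite exprNn -scalerA cp // scaler0.
Qed.

End Complement.

Lemma stable_image_contradiction : False.
Proof.
have [X [subX stableX kerX] covX] := exists_stable_complement.
have [_ _ [_ [y0 Ly0 ->] ne0]] := imga.
have [[c Ic surjc]|LX] := minL subX stableX (fun x Xx => (kerX x Xx).1).
  exact: (complement_contradiction kerX covX Ic surjc).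
by apply: ne0; have [] := kerX _ (LX _ Ly0).
Qed.

End StableImage.

Lemma minimal_counterexample_contradiction : False.
Proof.
have [a imga mina] := exists_minimal_power_stable_image.
exact: (stable_image_contradiction imga mina).
Qed.

End MinimalCounterexample.

Lemma artinian_ideal_surjective L : artinian_module M ->
  is_submodule L -> ideal_stable L -> ideal_surjective L.
Proof.
move=> artM subL stableL; apply: NNPP => not_surjL.
have [||L' [subL' stableL' not_surjL'] minL'] := @artinian_minimal _ id
  (fun L => [/\ is_submodule L, ideal_stable L & ~ ideal_surjective L]) artM.
- by move=> L' [].
- by exists L.
apply: (minimal_counterexample_contradiction artM subL' stableL' not_surjL').
move=> L'' subL'' stableL'' subL''L'.
have [|not_surj] := classic (ideal_surjective L''); [by left | right].
exact: minL' (And3 subL'' stableL'' not_surj) subL''L'.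
Qed.

End IdealStable.
End Submodules.

Lemma artinian_IM_ne_M (R : comPzRingType) (M : lmodType R) (I : R -> Prop) :
  artinian_module M -> is_ideal I -> (forall r, I r -> W M r) -> IM_ne_M M I.
Proof.
move=> artM idealI IW; apply: NNPP => IM_full.
have [||a Ia surja] := artinian_ideal_surjective idealI (L := fun=> True) artM.
- by split.
- by move=> m _; apply: ideal_span_of_not_IM_ne_M.
by have [m0 Hm0] := IW a Ia; have [y _] := surja m0 Logic.I; apply: Hm0.
Qed.

Theorem theorem2p12 (R : comPzRingType) :
  (bezout_ring R -> forall M : lmodType R, dual_property_A M) /\
  (krull_dim_zero R -> forall M : lmodType R, dual_property_A M) /\
  (forall M : lmodType R, fg_module M -> dual_property_A M) /\
  (forall M : lmodType R, artinian_module M ->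
     (forall I : R -> Prop, is_ideal I -> (forall r, I r -> @W R M r) -> @IM_ne_M R M I)
     /\ dual_property_A M).
Proof.
split; first by move=> bezoutR M; apply: bezout_dual_property_A.
split; first by move=> dim0 M; apply: krull_dim_zero_dual_property_A.
split; first exact: fg_module_dual_property_A.
move=> M artM; split=> [I|I /fg_ideal_is_ideal]; exact: artinian_IM_ne_M.
Qed.
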